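(* In the layer stripping setup (see context), let $T(\mathbf a_0)$ and $T(\mathbf b_0)$ be the $n\times n$ lower triangular Toeplitz matrices with first columns $\mathbf a_0$ and $\mathbf b_0$, and $K:=T(\mathbf a_0)T(\mathbf a_0)^*+T(\mathbf b_0)T(\mathbf b_0)^*$. Let $L\in\mathbb C^{n\times n}$ be the unit lower triangular matrix with entries $L_{ij}=a_{i-j,\,j+1}/a_{0,\,j+1}$ for $0\le j\le i\le n-1$ (and $L_{ij}=0$ for $i<j$), and $D:=\mathrm{diag}(a_{0,1}^2,a_{0,2}^2,\dots,a_{0,n}^2)$. Then $K=LDL^*$, and the vector $\boldsymbol\gamma=(\gamma_0,\dots,\gamma_{n-1})^T$ satisfies $$L\boldsymbol\gamma=\frac{1}{a_{0,0}}\mathbf b_0.$$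
   Context: For a Laurent polynomial $a$, $a^*(z):=\overline{a(1/\overline z)}$; for a matrix, $^*$ is the conjugate transpose. $\mathcal S$ is the set of pairs $(a,b)$ of Laurent polynomials with $aa^*+bb^*=1$ and $0<a^*(0)<\infty$; the NLFT of $\boldsymbol\gamma$ supported in $[p,q]$ is $\prod_{k=p}^{q}\frac{1}{\sqrt{1+|\gamma_k|^2}}\begin{pmatrix}1&\gamma_k z^k\\-\overline{\gamma_k}z^{-k}&1\end{pmatrix}=\begin{pmatrix}a&b\\-b^*&a^*\end{pmatrix}$ (ordered by increasing $k$), a bijection onto $\mathcal S$. Layer stripping setup: let $n\ge1$ and $(a,b)\in\mathcal S$ with $b$ a polynomial of degree at most $n-1$. Set $a_0^*:=a^*$, $b_0:=b$, and for $k=0,\dots,n-1$ define recursively $\gamma_k:=b_k(0)/a_k^*(0)$, $a_{k+1}^*:=(a_k^*+\overline{\gamma_k}b_k)/\sqrt{1+|\gamma_k|^2}$, $b_{k+1}:=(b_k-\gamma_k a_k^* )/(z\sqrt{1+|\gamma_k|^2})$ (well defined; $a_k^*,b_k$ are polynomials of degree at most $n-1-k$ with $a_k^*(0)>0$). Write $a_k^*(z)=\sum_{j=0}^{n-1-k}a_{j,k}z^j$, $b_k(z)=\sum_{j=0}^{n-1-k}b_{j,k}z^j$, $\mathbf a_0:=(a_{0,0},\dots,a_{n-1,0})^T$, $\mathbf b_0:=(b_{0,0},\dots,b_{n-1,0})^T$; conventions $a_{n-k,k}:=0$ for $0\le k\le n-1$ and $a_{0,n}:=1$. *)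

(* Complex numbers: an arbitrary numClosedFieldType C
   (e.g. the complex numbers; conjugation x^*, modulus `|x|, sqrtC). *)
From HB Require Import structures.
From mathcomp Require Import all_boot all_order all_algebra.
Set Implicit Arguments. Unset Strict Implicit. Unset Printing Implicit Defensive.
Import Order.TTheory GRing.Theory Num.Theory Num.Syntax.
Local Open Scope ring_scope.

Section LayerStripping.
Variable C : numClosedFieldType.

(* z^(N-1) * p^*(z) for a polynomial p of size <= N, where
   p^*(z) = conj(p(1/conj z)) = sum_j conj(p_j) z^{-j}. *)
Definition rev_conj (N : nat) (p : {poly C}) : {poly C} :=
  \poly_(i < N) (p`_(N.-1 - i))^*.

(* For polynomials A (playing a-star) and B (playing b), the Laurent identity
   a a^* + b b^* = 1, i.e. A A^* + B B^* = 1 (note a = star A), multiplied by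
   z^(N-1) with N = max(size A, size B). *)
Definition laurent_unit (A B : {poly C}) : Prop :=
  let N := maxn (size A) (size B) in
  A * rev_conj N A + B * rev_conj N B = 'X^(N.-1).

Definition ls_gamma (AB : {poly C} * {poly C}) : C := AB.2`_0 / AB.1`_0.

Definition ls_step (AB : {poly C} * {poly C}) : {poly C} * {poly C} :=
  let g := ls_gamma AB in
  let s := sqrtC (1 + `|g| ^+ 2) in
  (s^-1 *: (AB.1 + g^* *: AB.2),
   (s^-1 *: (AB.2 - g *: AB.1)) %/ 'X).

Fixpoint ls_layer (A B : {poly C}) (k : nat) : {poly C} * {poly C} :=
  match k with
  | 0 => (A, B)
  | k'.+1 => ls_step (ls_layer A B k')
  end.

Definition ls_gam (A B : {poly C}) (k : nat) : C := ls_gamma (ls_layer A B k).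

(* a_{j,k}, with the conventions a_{n-k,k} := 0 (k <= n-1) and a_{0,n} := 1 *)
Definition acoef (n : nat) (A B : {poly C}) (j k : nat) : C :=
  if k == n then (j == 0%N)%:R
  else if j == (n - k)%N then 0
  else (ls_layer A B k).1`_j.

Definition adjmx m p (M : 'M[C]_(m, p)) : 'M[C]_(p, m) := (map_mx (fun x => x^*) M)^T.

Definition toeplitzL n (v : 'cV[C]_n) : 'M[C]_n :=
  \matrix_(i < n, j < n) (if (j <= i)%N then v (insubd i (i - j)%N) 0 else 0).

Definition a0vec n (A : {poly C}) : 'cV[C]_n := \col_(i < n) A`_i.
Definition b0vec n (B : {poly C}) : 'cV[C]_n := \col_(i < n) B`_i.

Definition Kmx n (A B : {poly C}) : 'M[C]_n :=
  toeplitzL (a0vec n A) *m adjmx (toeplitzL (a0vec n A))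
  + toeplitzL (b0vec n B) *m adjmx (toeplitzL (b0vec n B)).

Definition Lmx n (A B : {poly C}) : 'M[C]_n :=
  \matrix_(i < n, j < n)
    (if (j <= i)%N then acoef n A B (i - j) j.+1 / acoef n A B 0 j.+1 else 0).

Definition Dmx n (A B : {poly C}) : 'M[C]_n :=
  diag_mx (\row_(j < n) (acoef n A B 0 j.+1) ^+ 2).

Definition gamvec n (A B : {poly C}) : 'cV[C]_n := \col_(i < n) ls_gam A B i.

End LayerStripping.

From HB Require Import structures.
From mathcomp Require Import all_boot all_order all_algebra.
From mathcomp Require Import ring zify.

(* Write [a_k(j)], [b_k(j)] for the [j]-th coefficients of [a_k^*], [b_k].
   One layer-stripping step acts on each pair [(a_k(j), b_k(j))] by the unitary
   matrix [s_k^-1 [[1, conj g_k], [-g_k, 1]]] (rot_fst, rot_snd) and produces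
   the [j]-th coefficients of [(a_{k+1}^*, z b_{k+1})].  Unitarity preserves the
   Gram sums of coefficient pairs.  Applied to the Toeplitz Gram sum
   [K_ij = sum_(l <= min i j) a_0(i-l) conj a_0(j-l) + b_0(i-l) conj b_0(j-l)],
   each step peels off the term [a_{k+1}(i) conj a_{k+1}(j)] and shifts [(i, j)]
   to [(i-1, j-1)]; this is [K = L D L^*].  Inverting the step gives
   [b_k(i+1)/a_k(0) = (b_{k+1}(i) + g_k a_{k+1}(i+1))/a_{k+1}(0)], whose
   unrolling is [L gamma = b_0 / a_0(0)].  Unitarity also preserves the
   autocorrelation identity [a a^* + b b^* = 1]: its top coefficient forces
   [deg a_{k+1}^* < n-k-1] and its constant term at the last step gives
   [a_n(0) = 1], which justifies the conventions built into [L]. *)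

Set Implicit Arguments. Unset Strict Implicit. Unset Printing Implicit Defensive.
Import Order.TTheory GRing.Theory Num.Theory Num.Syntax.
Local Open Scope ring_scope.

Section Rotation.
Variable C : numClosedFieldType.
Implicit Types g x y u v : C.

Definition rot_scale g : C := sqrtC (1 + `|g| ^+ 2).
Definition rot_fst g x y := (rot_scale g)^-1 * (x + g^* * y).
Definition rot_snd g x y := (rot_scale g)^-1 * (y - g * x).

Lemma rot_scale_gt0 g : 0 < rot_scale g.
Proof. by rewrite sqrtC_gt0 ltr_pwDl // exprn_ge0. Qed.

Lemma rot_scale_neq0 g : rot_scale g != 0.
Proof. by rewrite gt_eqF // rot_scale_gt0. Qed.

Lemma rot_scale_sqr g : rot_scale g ^+ 2 = 1 + g * g^*.
Proof. by rewrite sqrtCK normCK. Qed.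

Lemma conj_rot_scaleV g : ((rot_scale g)^-1)^* = (rot_scale g)^-1.
Proof. by rewrite geC0_conj // invr_ge0 ltW // rot_scale_gt0. Qed.

Lemma rot_unitary g x y u v :
  x * u^* + y * v^* =
  rot_fst g x y * (rot_fst g u v)^* + rot_snd g x y * (rot_snd g u v)^*.
Proof.
rewrite /rot_fst /rot_snd !(rmorphM, rmorphD, rmorphB) /= conj_rot_scaleV conjCK.
have s0 := rot_scale_neq0 g.
transitivity ((rot_scale g ^+ 2)^-1 * ((1 + g * g^*) * (x * u^* + y * v^*))).
  by rewrite -rot_scale_sqr; field.
by field.
Qed.

Lemma rot_fst_head g x : rot_fst g x (g * x) = rot_scale g * x.
Proof.
have s0 := rot_scale_neq0 g.
rewrite /rot_fst (_ : x + g^* * (g * x) = rot_scale g ^+ 2 * x); first by field.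
by rewrite rot_scale_sqr; ring.
Qed.

Lemma rot_snd_head g x : rot_snd g x (g * x) = 0.
Proof. by rewrite /rot_snd subrr mulr0. Qed.

Lemma rot_scale_mul_snd g x y :
  rot_scale g * y = rot_snd g x y + g * rot_fst g x y.
Proof.
have s0 := rot_scale_neq0 g.
rewrite /rot_snd /rot_fst.
transitivity ((rot_scale g)^-1 * (rot_scale g ^+ 2 * y)); first by field.
by rewrite rot_scale_sqr; ring.
Qed.

End Rotation.

Section Autocorrelation.
Variable C : numClosedFieldType.
Implicit Types (p : {poly C}) (N m : nat).

(* For [size p <= N], [acorr N p m] is the coefficient of [z^m] in [p p^*]. *)
Definition acorr N p m : C := \sum_(i < N) p`_(i + m) * (p`_i)^*.

Lemma coef_mul_rev_conj N p m : (0 < N)%N ->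
  (p * rev_conj N p)`_(N.-1 + m) = acorr N p m.
Proof.
move=> N_gt0; rewrite coefM.
have -> : (N.-1 + m).+1 = (m + N)%N by lia.
rewrite big_split_ord /= big1 ?add0r => [|i _].
  apply: eq_bigr => i _; rewrite coef_poly.
  have lt_iN := ltn_ord i.
  have -> : (N.-1 + m - (m + i) < N)%N by lia.
  have -> : (N.-1 - (N.-1 + m - (m + i)) = i)%N by lia.
  by rewrite addnC.
have lt_iN := ltn_ord i.
by rewrite coef_poly (_ : N.-1 + m - i < N = false)%N ?mulr0 //; lia.
Qed.

Lemma acorr_widen N N' p m : (size p <= N)%N -> (N <= N')%N ->
  acorr N' p m = acorr N p m.
Proof.
move=> /leq_sizeP p_small le_NN'; rewrite /acorr.
rewrite [RHS](big_ord_widen _ (fun i => p`_(i + m) * (p`_i)^*) le_NN') [RHS]big_mkcond.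
by apply: eq_bigr => i _; case: ltnP => // /p_small ->; rewrite conjC0 mulr0.
Qed.

Lemma acorr_top N p m : (0 < N)%N -> (size p <= m.+1)%N ->
  acorr N p m = p`_m * (p`_0)^*.
Proof.
case: N => // N _ /leq_sizeP p_small; rewrite /acorr big_ord_recl big1 ?addr0 // => i _.
by rewrite p_small ?mul0r // lift0 addSn ltnS leq_addl.
Qed.

Lemma laurent_unit_acorr A B m : A != 0 -> laurent_unit A B ->
  acorr (maxn (size A) (size B)) A m + acorr (maxn (size A) (size B)) B m
  = (m == 0)%:R.
Proof.
rewrite /laurent_unit; set N := maxn _ _ => A_neq0 AB_unit.
have N_gt0 : (0 < N)%N by rewrite leq_max size_poly_gt0 A_neq0.
have := congr1 (fun q : {poly C} => q`_(N.-1 + m)) AB_unit.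
rewrite /= coefD !coef_mul_rev_conj // coefXn => ->.
by rewrite -{2}[N.-1]addn0 eqn_add2l.
Qed.

End Autocorrelation.

Section ToeplitzGram.
Variable C : numClosedFieldType.

Definition tgram (p : {poly C}) (i j : nat) : C :=
  \sum_(l < (minn i j).+1) p`_(i - l) * (p`_(j - l))^*.

Lemma sum_ord_le_minn n i j (F : nat -> C) : (i < n)%N ->
  \sum_(l < n) (if (l <= i)%N && (l <= j)%N then F l else 0) =
  \sum_(l < (minn i j).+1) F l.
Proof.
move=> lt_in; rewrite (big_ord_widen n F (leq_ltn_trans (geq_minl i j) lt_in)).
by rewrite [RHS]big_mkcond; apply: eq_bigr => l _; rewrite ltnS leq_min.
Qed.

Lemma toeplitzL_col n (p : {poly C}) (i j : 'I_n) :
  toeplitzL (\col_(k < n) p`_k) i j = if (j <= i)%N then p`_(i - j) else 0.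
Proof.
rewrite mxE; case: ifP => // _; rewrite mxE val_insubd.
by rewrite (leq_ltn_trans (leq_subr j i) (ltn_ord i)).
Qed.

Lemma toeplitzL_mul_adj n (p : {poly C}) (i j : 'I_n) :
  (toeplitzL (\col_(k < n) p`_k) *m adjmx (toeplitzL (\col_(k < n) p`_k))) i j
  = tgram p i j.
Proof.
rewrite mxE /tgram -(sum_ord_le_minn j (fun l => p`_(i - l) * (p`_(j - l))^*) (ltn_ord i)).
apply: eq_bigr => l _; rewrite /adjmx [_^T _ _]mxE [map_mx _ _ _ _]mxE !toeplitzL_col.
by case: ifP; case: ifP => //= _ _; rewrite ?rmorph0 ?mulr0 ?mul0r.
Qed.

End ToeplitzGram.

Section Layers.
Variables (C : numClosedFieldType) (A B : {poly C}).
Hypothesis A0_gt0 : 0 < A`_0.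

Definition lsA k := (ls_layer A B k).1.
Definition lsB k := (ls_layer A B k).2.
Local Notation gam k := (ls_gam A B k).

Lemma A_neq0 : A != 0.
Proof. by apply: contraTneq A0_gt0 => ->; rewrite coef0 ltxx. Qed.

Lemma coef_lsA_succ k j :
  (lsA k.+1)`_j = rot_fst (gam k) (lsA k)`_j (lsB k)`_j.
Proof. by rewrite /lsA /= coefZ coefD coefZ. Qed.

Lemma coef_lsB_succ k j :
  (lsB k.+1)`_j = rot_snd (gam k) (lsA k)`_j.+1 (lsB k)`_j.+1.
Proof.
rewrite /lsB /= -[X in _ %/ X]expr1 -Pdiv.IdomainMonic.drop_poly_divp.
by rewrite coef_drop_poly addn1 coefZ coefB coefZ.
Qed.

Lemma lsA0_gt0 k : 0 < (lsA k)`_0.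
Proof.
elim: k => [|k IHk]; first exact: A0_gt0.
rewrite coef_lsA_succ.
rewrite (_ : (lsB k)`_0 = gam k * (lsA k)`_0); last by rewrite divfK ?gt_eqF.
by rewrite rot_fst_head mulr_gt0 ?rot_scale_gt0.
Qed.

Lemma lsA0_neq0 k : (lsA k)`_0 != 0.
Proof. by rewrite gt_eqF ?lsA0_gt0. Qed.

Lemma conj_lsA0 k : ((lsA k)`_0)^* = (lsA k)`_0.
Proof. by rewrite geC0_conj // ltW ?lsA0_gt0. Qed.

Lemma lsB0 k : (lsB k)`_0 = gam k * (lsA k)`_0.
Proof. by rewrite divfK ?lsA0_neq0. Qed.

Lemma lsA0_succ k : (lsA k.+1)`_0 = rot_scale (gam k) * (lsA k)`_0.
Proof. by rewrite coef_lsA_succ lsB0 rot_fst_head. Qed.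

Lemma coef_X_lsB_succ k j :
  ('X * lsB k.+1)`_j = rot_snd (gam k) (lsA k)`_j (lsB k)`_j.
Proof.
case: j => [|j]; last by rewrite coefXM coef_lsB_succ.
by rewrite coefXM lsB0 rot_snd_head.
Qed.

Lemma lsB_div_lsA0_sum k i : (lsB k)`_i / (lsA k)`_0 =
  \sum_(l < i.+1) gam (k + l) * (lsA (k + l).+1)`_(i - l) / (lsA (k + l).+1)`_0.
Proof.
elim: i k => [|i IHi] k; first by rewrite big_ord1 addn0 lsB0 !mulfK ?lsA0_neq0.
have -> : (lsB k)`_i.+1 / (lsA k)`_0 =
    (lsB k.+1)`_i / (lsA k.+1)`_0 + gam k * (lsA k.+1)`_i.+1 / (lsA k.+1)`_0.
  rewrite -mulrDl coef_lsB_succ coef_lsA_succ -rot_scale_mul_snd lsA0_succ.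
  by rewrite invfM mulrACA mulfV ?rot_scale_neq0 ?mul1r.
rewrite IHi [RHS]big_ord_recl addn0 subn0 addrC; congr (_ + _).
by apply: eq_bigr => l _; rewrite lift0 addSnnS subSS.
Qed.

Lemma layer_unitary k u v :
  (lsA k)`_u * ((lsA k)`_v)^* + (lsB k)`_u * ((lsB k)`_v)^* =
  (lsA k.+1)`_u * ((lsA k.+1)`_v)^* + ('X * lsB k.+1)`_u * (('X * lsB k.+1)`_v)^*.
Proof. by rewrite !coef_lsA_succ !coef_X_lsB_succ -rot_unitary. Qed.

Lemma tgram_layer k i j : tgram (lsA k) i j + tgram (lsB k) i j =
  \sum_(l < (minn i j).+1) (lsA (k + l).+1)`_(i - l) * ((lsA (k + l).+1)`_(j - l))^*.
Proof.
rewrite /tgram -big_split /=; elim: i j k => [|i IHi] [|j] k;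
  rewrite ?min0n ?minn0 ?big_ord1 ?subn0 ?addn0 ?layer_unitary ?coefXM /=
    ?(conjC0, mulr0, mul0r, addr0) //.
rewrite minnSS; under eq_bigr => l _ do rewrite layer_unitary.
rewrite big_split /= big_ord_recl [X in _ + X]big_ord_recr /= !subSS.
have -> : ('X * lsB k.+1)`_(i - minn i j) * (('X * lsB k.+1)`_(j - minn i j))^* = 0.
  by case: (leqP i j) => _; rewrite subnn [('X * _)`_0]coefXM ?conjC0 ?mulr0 ?mul0r.
rewrite addr0 -addrA -big_split [RHS]big_ord_recl addn0 !subn0; congr (_ + _).
transitivity (\sum_(l < (minn i j).+1)
    (lsA (k.+1 + l).+1)`_(i - l) * ((lsA (k.+1 + l).+1)`_(j - l))^*); last first.
  by apply: eq_bigr => l _; rewrite lift0 addSnnS subSS.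
rewrite -IHi; apply: eq_bigr => l _ /=.
have /andP[le_li le_lj] : (l <= i)%N && (l <= j)%N by rewrite -leq_min -ltnS.
by rewrite /bump add1n !subSS !subSn // !coefXM.
Qed.

Variable n : nat.
Hypotheses (n_gt0 : (0 < n)%N) (size_B : (size B <= n)%N) (AB_unit : laurent_unit A B).

Lemma size_A : (size A <= n)%N.
Proof.
rewrite leqNgt; apply/negP => lt_nA.
set m := (size A).-1.
have size_Am : size A = m.+1 by rewrite prednK // (leq_ltn_trans _ lt_nA).
have le_Bm : (size B <= m)%N by rewrite -ltnS -size_Am (leq_ltn_trans size_B).
have m_gt0 : (0 < m)%N by rewrite -ltnS -size_Am (leq_ltn_trans n_gt0).
have := laurent_unit_acorr m A_neq0 AB_unit.
rewrite (maxn_idPl (ltnW (leq_ltn_trans size_B lt_nA))).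
rewrite !acorr_top ?size_Am ?(leqW le_Bm) //.
rewrite (nth_default 0 le_Bm) mul0r addr0 (negbTE (lt0n_neq0 m_gt0)) => /eqP.
by rewrite mulf_eq0 conjC_eq0 (gt_eqF A0_gt0) orbF /m -lead_coefE lead_coef_eq0 (negPf A_neq0).
Qed.

Definition layer_unit k := [/\ (size (lsA k) <= n - k)%N, (size (lsB k) <= n - k)%N
  & forall m, acorr n (lsA k) m + acorr n (lsB k) m = (m == 0)%:R].

Lemma layer_unit0 : layer_unit 0.
Proof.
have le_Nn : (maxn (size A) (size B) <= n)%N by rewrite geq_max size_A size_B.
split; rewrite ?subn0 ?size_A // => m.
by rewrite -(laurent_unit_acorr m A_neq0 AB_unit) (acorr_widen m (leq_maxl _ _) le_Nn)
  (acorr_widen m (leq_maxr _ _) le_Nn).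
Qed.

Lemma acorr_layer_succ k m : (size (lsA k) <= n)%N -> (size (lsB k) <= n)%N ->
  acorr n (lsA k.+1) m + acorr n (lsB k.+1) m = acorr n (lsA k) m + acorr n (lsB k) m.
Proof.
move=> /leq_sizeP szA /leq_sizeP szB; rewrite /acorr -!big_split /=.
under [RHS]eq_bigr => i _ do rewrite layer_unitary.
rewrite !big_split /=; congr (_ + _); case: n n_gt0 szA szB => // n' _ szA szB.
rewrite big_ord_recr big_ord_recl /=.
have -> : (lsB k.+1)`_n' = 0 by rewrite coef_lsB_succ szA ?szB // /rot_snd mulr0 subrr mulr0.
rewrite rmorph0 mulr0 addr0 [('X * _)`_0]coefXM rmorph0 mulr0 add0r.
by apply: eq_bigr => i _; rewrite /bump add1n addSn !coefXM.
Qed.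

Lemma layer_unit_succ k : (k.+1 < n)%N -> layer_unit k -> layer_unit k.+1.
Proof.
move=> lt_k1n [szA szB unitk].
have le_kn : (n - k <= n)%N by apply: leq_subr.
have subnkS : (n - k = (n - k.+1).+1)%N by rewrite subnSK // ltnW.
split; last by move=> m; rewrite acorr_layer_succ ?unitk ?(leq_trans szA) ?(leq_trans szB).
- apply/leq_sizeP => j le_j; rewrite coef_lsA_succ.
  have [lt_j|ge_j] := ltnP j (n - k); last first.
    by rewrite !(leq_sizeP _ _ szA, leq_sizeP _ _ szB) // /rot_fst mulr0 addr0 mulr0.
  have -> : j = (n - k.+1)%N by apply/eqP; rewrite eqn_leq le_j andbT -ltnS -subnkS.
  have := unitk (n - k.+1)%N.
  rewrite !acorr_top -?subnkS ?(leq_trans n_gt0) // lsB0 rmorphM /= conj_lsA0.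
  rewrite (negbTE (lt0n_neq0 _)) ?subn_gt0 // mulr0n => top_corr0.
  rewrite /rot_fst (_ : _ + _ = 0) ?mulr0 //.
  by apply: (mulIf (lsA0_neq0 k)); rewrite mul0r -[RHS]top_corr0; ring.
- apply/leq_sizeP => j le_j; rewrite coef_lsB_succ.
  by rewrite !(leq_sizeP _ _ szA, leq_sizeP _ _ szB) ?subnkS // /rot_snd mulr0 subrr mulr0.
Qed.

Lemma layer_unit_lt k : (k < n)%N -> layer_unit k.
Proof.
elim: k => [_|k IHk lt_k1n]; first exact: layer_unit0.
exact: layer_unit_succ (IHk (ltnW lt_k1n)).
Qed.

Lemma lsA0_last : (lsA n)`_0 = 1.
Proof.
have [n' n_def] : exists n', n = n'.+1 by exists n.-1; rewrite prednK.
have [szA szB unit_n'] : layer_unit n' by apply: layer_unit_lt; rewrite n_def.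
rewrite n_def subSnn in szA szB.
have := unit_n' 0%N; rewrite !acorr_top // lsB0 rmorphM /= conj_lsA0 mulr1n => corr0.
have := lsA0_gt0 n; rewrite n_def lsA0_succ.
have : (rot_scale (gam n') * (lsA n')`_0) ^+ 2 = 1.
  by rewrite exprMn rot_scale_sqr -[RHS]corr0; ring.
by move=> /eqP; rewrite sqrf_eq1 => /orP[/eqP //|/eqP ->]; rewrite ltr0N1.
Qed.

Lemma acoef_layer l i : (l <= i < n)%N -> acoef n A B (i - l) l.+1 = (lsA l.+1)`_(i - l).
Proof.
case/andP => le_li lt_in; rewrite /acoef.
case: eqP => [l1n|/eqP l1n].
  have -> : i = l by apply/eqP; rewrite eqn_leq le_li andbT -ltnS l1n.
  by rewrite subnn eqxx l1n lsA0_last.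
case: eqP => // i_top.
have [szA _ _] : layer_unit l.+1.
  by apply: layer_unit_lt; rewrite ltn_neqAle l1n (leq_ltn_trans le_li).
by rewrite i_top (leq_sizeP _ _ szA).
Qed.

Lemma acoef0_layer l : (l < n)%N -> acoef n A B 0 l.+1 = (lsA l.+1)`_0.
Proof. by move=> lt_ln; have := @acoef_layer l l; rewrite subnn leqnn lt_ln; apply. Qed.

Lemma Lmx_layer (i l : 'I_n) : Lmx n A B i l =
  if (l <= i)%N then (lsA l.+1)`_(i - l) / (lsA l.+1)`_0 else 0.
Proof.
rewrite mxE; case: ifP => // le_li.
by rewrite acoef_layer ?le_li ?ltn_ord // acoef0_layer.
Qed.

Lemma Kmx_factor : Kmx n A B = Lmx n A B *m Dmx n A B *m adjmx (Lmx n A B).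
Proof.
apply/matrixP => i j; rewrite mxE !toeplitzL_mul_adj (tgram_layer 0).
rewrite -(sum_ord_le_minn j (fun l => (lsA l.+1)`_(i - l) * ((lsA l.+1)`_(j - l))^*)
  (ltn_ord i)) mxE; apply: eq_bigr => l _.
rewrite mul_mx_diag [_^T _ _]mxE [map_mx _ _ _ _]mxE mxE !Lmx_layer mxE acoef0_layer //.
case: leqP => _; case: leqP => _ /=; rewrite ?rmorph0 ?mulr0 ?mul0r //.
rewrite rmorphM /= fmorphV /= conj_lsA0.
by field; rewrite lsA0_neq0.
Qed.

Lemma Lmx_gamma : Lmx n A B *m gamvec n A B = (A`_0)^-1 *: b0vec n B.
Proof.
apply/matrixP => i z; rewrite !mxE mulrC (lsB_div_lsA0_sum 0 i).
rewrite (big_ord_widen n (fun l => gam l * (lsA l.+1)`_(i - l) / (lsA l.+1)`_0) (ltn_ord i)).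
rewrite [RHS]big_mkcond; apply: eq_bigr => l _; rewrite Lmx_layer mxE ltnS.
by case: leqP => _; rewrite ?mul0r // mulrC mulrA.
Qed.

End Layers.

Theorem lemma5p3 (C : numClosedFieldType) (n : nat) (A B : {poly C}) :
  (1 <= n)%N ->
  (size B <= n)%N ->
  laurent_unit A B ->
  0 < A`_0 ->
  Kmx n A B = Lmx n A B *m Dmx n A B *m adjmx (Lmx n A B) /\
  Lmx n A B *m gamvec n A B = (A`_0)^-1 *: b0vec n B.
Proof.
move=> n_gt0 size_B AB_unit A0_gt0.
by split; [exact: Kmx_factor | exact: Lmx_gamma].
Qed.
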